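(* Consider $f(x)=x^2+x$ as a map $\mathbb{Z}_2\to\mathbb{Z}_2$. Then $0$ is a fixed point, $f(1+2\mathbb{Z}_2)\subset 2\mathbb{Z}_2$, and $$2\mathbb{Z}_2=\{0\}\sqcup\Big(\bigsqcup_{n\ge2}\big(2^{n-1}+2^n\mathbb{Z}_2\big)\Big),$$ where for each $n\ge2$ the set $2^{n-1}+2^n\mathbb{Z}_2$ is the disjoint union of the $2^{n-2}$ minimal components $$2^{n-1}+t2^n+2^{2n-2}\mathbb{Z}_2,\qquad t=0,\dots,2^{n-2}-1.$$
   Context: A minimal component of $f$ is a clopen set $E\subset\mathbb{Z}_2$ with $f(E)\subset E$ such that $f:E\to E$ is minimal (every orbit in $E$ is dense in $E$). *)

(* The ring Z_2 of 2-adic integers is modelled as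
   coherent sequences of residues: x_n = x mod 2^n, with x_n < 2^n and
   x_{n+1} mod 2^n = x_n (the inverse limit of Z/2^nZ). *)
From mathcomp Require Import all_boot.
Set Implicit Arguments. Unset Strict Implicit. Unset Printing Implicit Defensive.

Definition coherent (x : nat -> nat) : Prop :=
  forall n, x n < 2 ^ n /\ x n.+1 %% 2 ^ n = x n.

Record Z2 := mkZ2 { res : nat -> nat; resP : coherent res }.

Lemma coherent0 : coherent (fun _ => 0).
Proof. by move=> n; rewrite expn_gt0 mod0n. Qed.

Definition Z2zero : Z2 := mkZ2 coherent0.

Lemma coherent_f (x : Z2) :
  coherent (fun n => (res x n ^ 2 + res x n) %% 2 ^ n).
Proof.
move=> n; split; first by rewrite ltn_pmod // expn_gt0.
have hd : 2 ^ n %| 2 ^ n.+1 by rewrite dvdn_exp2l.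
rewrite modn_dvdm //.
have [_ h] := resP x n.
by rewrite -h -[RHS]modnDm modnXm modn_mod modnDm.
Qed.

Definition f (x : Z2) : Z2 := mkZ2 (coherent_f x).

Definition open_set (A : Z2 -> Prop) : Prop :=
  forall x, A x -> exists n, forall y, res y n = res x n -> A y.
Definition closed_set (A : Z2 -> Prop) : Prop := open_set (fun x => ~ A x).
Definition clopen (A : Z2 -> Prop) : Prop := open_set A /\ closed_set A.

Definition orbit_dense_in (g : Z2 -> Z2) (x : Z2) (E : Z2 -> Prop) : Prop :=
  forall y, E y -> forall m, exists k, res (iter k g x) m = res y m.

Definition minimal_component (g : Z2 -> Z2) (E : Z2 -> Prop) : Prop :=
  clopen E /\ (forall x, E x -> E (g x)) /\ (forall x, E x -> orbit_dense_in g x E).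

Definition level (n : nat) (x : Z2) : Prop := res x n = 2 ^ n.-1.
Definition mincomp (n t : nat) (x : Z2) : Prop :=
  res x (2 * n - 2) = 2 ^ n.-1 + t * 2 ^ n.

From mathcomp Require Import all_boot zify.
From Stdlib Require Import ProofIrrelevance FunctionalExtensionality Classical.

(* A point of 2^(n-1) + 2^n Z_2 is u = 2^(n-1) w with w odd, so u^2 = 2^(2n-2) mod 2^(2n-1)
   and f(u) = u + u^2 is congruent to u mod 2^(2n-2) while flipping the next binary digit.
   As f(u + h) = f(u) + h mod 2^(m+2) whenever 2^m divides h (m >= 2, u even), this
   propagates by doubling: f^(2^j)(u) = u + 2^(2n-2+j) mod 2^(2n-1+j).  Thus modulo every
   2^M, f acts on the residues of u + 2^(2n-2) Z_2 as a single cycle (an odometer), and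
   every orbit in that class is dense. *)

Set Implicit Arguments. Unset Strict Implicit. Unset Printing Implicit Defensive.

Definition fnat (v : nat) : nat := v ^ 2 + v.

Lemma fnat_mod a b d : a = b %[mod d] -> fnat a = fnat b %[mod d].
Proof.
have fnat_modE c : fnat c = fnat (c %% d) %[mod d].
  by rewrite /fnat -[in RHS]modnDm modnXm modn_mod modnDm.
by move=> ab; rewrite fnat_modE ab -fnat_modE.
Qed.

Lemma leq_iter_fnat k v : v <= iter k fnat v.
Proof. by elim: k => //= k IH; apply: leq_trans IH (leq_addl _ _). Qed.

Lemma fnat_even w : 2 %| fnat w.
Proof. by rewrite /fnat dvdn2 oddD oddX /=; case: (odd w). Qed.

Lemma fnat_addr_mod m w h : 2 <= m -> 2 %| w -> 2 ^ m %| h ->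
  fnat (w + h) = fnat w + h %[mod 2 ^ (m + 2)].
Proof.
move=> m_ge2 w_even h_dvd.
have -> : fnat (w + h) = h * (w.*2 + h) + (fnat w + h) by rewrite /fnat; lia.
suff /eqP dvd_cross : 2 ^ (m + 2) %| h * (w.*2 + h) by rewrite -modnDml dvd_cross.
rewrite mulnDr; apply: dvdn_add.
  by rewrite expnD dvdn_mul // -mul2n (_ : 2 ^ 2 = 2 * 2) // dvdn_pmul2l.
apply: dvdn_trans (dvdn_mul h_dvd h_dvd); rewrite -expnD dvdn_exp2l //; lia.
Qed.

Lemma iter_fnat_addr_mod m w h i : 2 <= m -> 2 %| w -> 2 ^ m %| h ->
  iter i fnat (w + h) = iter i fnat w + h %[mod 2 ^ (m + 2)].
Proof.
move=> m_ge2 w_even h_dvd; elim: i => [|i IH] //=.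
rewrite (fnat_mod IH) fnat_addr_mod //.
by case: i {IH} => //= i; apply: fnat_even.
Qed.

Lemma modn_double a d : 0 < d -> a %% (2 * d) = odd (a %/ d) * d + a %% d.
Proof.
move=> d_gt0; rewrite {1}(divn_eq (a %% (2 * d)) d) -modn_divl modn2.
by rewrite modn_dvdm // dvdn_mull.
Qed.

Lemma eqn_mod_double a b d : 0 < d -> a = b %[mod d] ->
  a = b %[mod 2 * d] \/ a = b + d %[mod 2 * d].
Proof.
move=> d_gt0 ab; rewrite !modn_double // [b + d]addnC modnDl divnDl ?dvdnn // divnn d_gt0.
rewrite add1n /= ab; case: (odd (a %/ d)); case: (odd (b %/ d)); by [left | right].
Qed.

Section Level.

Variable n : nat.
Hypothesis n_ge2 : 2 <= n.

Definition levelr (u : nat) : Prop := u %% 2 ^ n = 2 ^ n.-1.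

Let N := 2 * n - 2.

Lemma expnS_pred : 2 ^ n = 2 * 2 ^ n.-1.
Proof. by rewrite -expnS prednK //; lia. Qed.

Lemma levelrE u : levelr u -> u = 2 ^ n.-1 * (u %/ 2 ^ n).*2.+1.
Proof. by rewrite /levelr => ur; rewrite {1}(divn_eq u (2 ^ n)) ur expnS_pred; lia. Qed.

Lemma sqr_levelr u : levelr u -> u ^ 2 = 2 ^ N * (u %/ 2 ^ n).*2.+1 ^ 2.
Proof.
by move=> /levelrE {1}->; rewrite expnMn -expnM; congr (2 ^ _ * _); rewrite /N; lia.
Qed.

Lemma fnat_levelr_mod u : levelr u -> fnat u = u %[mod 2 ^ N].
Proof. by move=> ur; rewrite /fnat sqr_levelr // -modnDml modnMr. Qed.

Lemma levelr_fnat u : levelr u -> levelr (fnat u).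
Proof.
move=> ur; rewrite /levelr -(modn_dvdm _ (dvdn_exp2l 2 (_ : n <= N))); last by rewrite /N; lia.
by rewrite fnat_levelr_mod // modn_dvdm // dvdn_exp2l // /N; lia.
Qed.

Lemma levelr_iter k u : levelr u -> levelr (iter k fnat u).
Proof. by move=> ur; elim: k => //= k IH; apply: levelr_fnat. Qed.

Lemma levelr_even u : levelr u -> 2 %| u.
Proof.
by move=> /levelrE ->; apply: dvdn_mulr; rewrite -{1}(expn1 2) dvdn_exp2l //; lia.
Qed.

Lemma iter_fnat_exp2 j u : levelr u ->
  iter (2 ^ j) fnat u = u + 2 ^ (N + j) %[mod 2 ^ (N + j).+1].
Proof.
elim: j u => [|j IH] u ur.
  rewrite addn0 /= /fnat sqr_levelr //; set q := u %/ 2 ^ n.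
  have -> : 2 ^ N * q.*2.+1 ^ 2 + u = (q * q + q).*2 * 2 ^ N.+1 + (u + 2 ^ N).
    by rewrite -mulnn expnS; nia.
  by rewrite modnMDl.
set m := N + j; have m_ge2 : 2 <= m by rewrite /m /N; lia.
set u' := iter (2 ^ j) fnat u; have u'_mod := IH u ur; rewrite -/m -/u' in u'_mod.
set h := u' - u; have u'E : u' = u + h by rewrite /h subnKC // leq_iter_fnat.
have h_mod : h = 2 ^ m %[mod 2 ^ m.+1].
  by apply/eqP; rewrite -(eqn_modDl u) -u'E; apply/eqP.
have h_dvd : 2 ^ m %| h.
  rewrite /dvdn -(@modn_dvdm (2 ^ m.+1)) ?dvdn_exp2l // h_mod.
  by rewrite modn_dvdm ?dvdn_exp2l // modnn.
have h2_mod : h.*2 = 2 ^ m.+1 %[mod 2 ^ m.+2].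
  by rewrite -mul2n (expnS 2 m.+1) -muln_modr h_mod muln_modr -!expnS.
rewrite (_ : N + j.+1 = m.+1) ?addnS // expnS mul2n -addnn iterD -/u' u'E.
have := iter_fnat_addr_mod (2 ^ j) m_ge2 (levelr_even ur) h_dvd.
rewrite addn2 => ->; rewrite -/u' u'E.
by rewrite -addnA addnn -modnDmr h2_mod modnDmr.
Qed.

Lemma levelr_orbit m u v : levelr u -> u = v %[mod 2 ^ N] ->
  exists k, iter k fnat u = v %[mod 2 ^ m].
Proof.
move=> ur uv; elim: m => [|m [k uk]]; first by exists 0; rewrite !modn1.
have [mN | Nm] := leqP m.+1 N.
  exists 0; rewrite /= -(modn_dvdm u (dvdn_exp2l 2 mN)) uv.
  by rewrite modn_dvdm // dvdn_exp2l.
have [uk' | uk'] := eqn_mod_double (expn_gt0 2 m) uk; first by exists k; rewrite expnS.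
have mE : m = N + (m - N) by rewrite subnKC // -ltnS.
exists (2 ^ (m - N) + k); rewrite iterD.
have := iter_fnat_exp2 (m - N) (levelr_iter k ur); rewrite -mE => ->.
by rewrite expnS -modnDml uk' modnDml -addnA addnn -mul2n -modnDmr modnn addn0.
Qed.

End Level.

Lemma res_mod (x : Z2) k n : k <= n -> res x n %% 2 ^ k = res x k.
Proof.
move=> /subnKC <-; elim: (n - k) => [|d IH].
  by rewrite addn0 modn_small //; case: (resP x k).
rewrite addnS -IH; have [_ <-] := resP x (k + d).
by rewrite modn_dvdm // dvdn_exp2l // leq_addr.
Qed.

Lemma res_iter_f (x : Z2) k m : res (iter k f x) m = iter k fnat (res x m) %% 2 ^ m.
Proof.
elim: k => [|k IH] /=; first by rewrite modn_small //; case: (resP x m).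
by rewrite IH; apply: fnat_mod; rewrite modn_mod.
Qed.

Lemma Z2_ext (x y : Z2) : (forall n, res x n = res y n) -> x = y.
Proof.
case: x y => rx px [ry py] /= xy.
have rxy : rx = ry by apply: functional_extensionality.
by subst ry; f_equal; apply: proof_irrelevance.
Qed.

Lemma f_zero : f Z2zero = Z2zero.
Proof. by apply: Z2_ext => k /=; rewrite exp0n // mod0n. Qed.

Lemma level_res n M (x : Z2) : n <= M -> level n x <-> levelr n (res x M).
Proof. by move=> nM; rewrite /levelr res_mod. Qed.

Lemma level_first_nonzero n (x : Z2) : 0 < n ->
  res x n.-1 = 0 -> res x n != 0 -> level n x.
Proof.
move=> n_gt0 x0 x1; rewrite /level.
have [x_lt _] := resP x n; have := res_mod x (leq_pred n); rewrite x0.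
rewrite -{2}(prednK n_gt0) expnS in x_lt.
move/eqP; rewrite -/(dvdn _ _) => /dvdnP [q xq].
move: x_lt x1; rewrite xq ltn_pmul2r ?expn_gt0 //.
by case: q {xq} => [|[|]] //; rewrite mul1n.
Qed.

Lemma even_Z2P (x : Z2) :
  res x 1 = 0 <-> x = Z2zero \/ exists n, 2 <= n /\ level n x.
Proof.
split=> [x1 | [->|[n [n_ge2 xn]]]] //; last first.
  rewrite -(res_mod x (ltnW n_ge2)) xn.
  by apply/eqP; rewrite -/(dvdn _ _) -{1}(expn1 2) dvdn_exp2l //; lia.
have [x0 | /not_all_ex_not [k /eqP xk]] := classic (forall k, res x k = 0).
  by left; apply: Z2_ext.
right; have [n xn n_min] := ex_minnP (ex_intro (fun k => res x k != 0) k xk).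
have n_ge2 : 2 <= n.
  case: n xn n_min => [|[|n]] // xn _; last by rewrite x1 in xn.
  by have [] := resP x 0; rewrite ltnS leqn0 (negbTE xn).
exists n; split => //; apply: level_first_nonzero; [lia | | by []].
by apply/eqP; apply: contraT => /n_min; lia.
Qed.

Lemma level_inj n m (x : Z2) : 2 <= n -> 2 <= m -> level n x -> level m x -> n = m.
Proof.
wlog nm : n m / n <= m => [hwlog|] n_ge2 m_ge2 xn xm.
  by case/orP: (leq_total n m) => ? ; [|symmetry]; apply: hwlog.
apply/eqP; rewrite eqn_leq nm leqNgt; apply/negP => n_lt_m.
have := res_mod x (ltnW n_lt_m); rewrite xm xn.
have /eqP -> : 2 ^ n %| 2 ^ m.-1 by rewrite dvdn_exp2l //; lia.
by have := expn_gt0 2 n.-1; lia.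
Qed.

Lemma level_mincompP n (x : Z2) : 2 <= n ->
  level n x <-> exists t, t < 2 ^ (n - 2) /\ mincomp n t x.
Proof.
move=> n_ge2; have nN : n <= 2 * n - 2 by lia.
have expN : 2 ^ (n - 2) * 2 ^ n = 2 ^ (2 * n - 2) by rewrite -expnD; congr (2 ^ _); lia.
rewrite /level /mincomp; split=> [xn | [t [_ xt]]].
  exists (res x (2 * n - 2) %/ 2 ^ n); split.
    by rewrite ltn_divLR ?expn_gt0 // expN; case: (resP x (2 * n - 2)).
  by rewrite {1}(divn_eq (res x (2 * n - 2)) (2 ^ n)) res_mod // xn addnC.
by rewrite -(res_mod x nN) xt addnC modnMDl modn_small // ltn_exp2l; lia.
Qed.

Lemma mincomp_inj n t s (x : Z2) : mincomp n t x -> mincomp n s x -> t = s.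
Proof.
by rewrite /mincomp => -> /addnI/eqP; rewrite eqn_pmul2r ?expn_gt0 // => /eqP.
Qed.

Lemma mincomp_clopen n t : clopen (mincomp n t).
Proof. by split=> x xt; exists (2 * n - 2) => y yx; move: xt; rewrite /mincomp yx. Qed.

Lemma mincomp_levelr n t (x : Z2) : 2 <= n -> t < 2 ^ (n - 2) -> mincomp n t x ->
  forall M, 2 * n - 2 <= M -> levelr n (res x M).
Proof.
move=> n_ge2 t_lt xt M NM; rewrite -level_res; last by lia.
by apply/level_mincompP => //; exists t.
Qed.

Lemma mincomp_f n t (x : Z2) : 2 <= n -> t < 2 ^ (n - 2) ->
  mincomp n t x -> mincomp n t (f x).
Proof.
move=> n_ge2 t_lt xt; rewrite /mincomp /= fnat_levelr_mod //.
  by rewrite modn_small //; case: (resP x (2 * n - 2)).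
exact: mincomp_levelr xt _ (leqnn _).
Qed.

Lemma mincomp_orbit_dense n t (x : Z2) : 2 <= n -> t < 2 ^ (n - 2) ->
  mincomp n t x -> orbit_dense_in f x (mincomp n t).
Proof.
move=> n_ge2 t_lt xt y yt m; set M := m + (2 * n - 2).
have xyN : res x M = res y M %[mod 2 ^ (2 * n - 2)].
  by rewrite !res_mod ?leq_addl // xt yt.
have [k xyk] := levelr_orbit n_ge2 m (mincomp_levelr n_ge2 t_lt xt (leq_addl _ _)) xyN.
rewrite -/M in xyk; exists k.
rewrite -(res_mod (iter k f x) (leq_addr _ m : m <= M)) res_iter_f.
by rewrite modn_dvdm ?dvdn_exp2l ?leq_addr // xyk res_mod // leq_addr.
Qed.

Lemma minimal_component_mincomp n t : 2 <= n -> t < 2 ^ (n - 2) ->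
  minimal_component f (mincomp n t).
Proof.
move=> n_ge2 t_lt; split; first exact: mincomp_clopen.
by split=> x xt; [apply: mincomp_f | apply: mincomp_orbit_dense].
Qed.

Theorem theoremE :
  f Z2zero = Z2zero /\
  (forall x, res x 1 = 1 -> res (f x) 1 = 0) /\
  (forall x, res x 1 = 0 <-> (x = Z2zero \/ exists n, 2 <= n /\ level n x)) /\
  (forall n, 2 <= n -> ~ level n Z2zero) /\
  (forall n m x, 2 <= n -> 2 <= m -> level n x -> level m x -> n = m) /\
  (forall n, 2 <= n ->
     (forall x, level n x <-> exists t, t < 2 ^ (n - 2) /\ mincomp n t x) /\
     (forall t s x, t < 2 ^ (n - 2) -> s < 2 ^ (n - 2) ->
        mincomp n t x -> mincomp n s x -> t = s) /\
     (forall t, t < 2 ^ (n - 2) -> minimal_component f (mincomp n t))).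
Proof.
split; first exact: f_zero.
split; first by move=> x /= ->.
split; first exact: even_Z2P.
split; first by move=> n _; rewrite /level /=; have := expn_gt0 2 n.-1; lia.
split; first exact: level_inj.
move=> n n_ge2; split; first by move=> x; apply: level_mincompP.
split; first by move=> t s x _ _; apply: mincomp_inj.
by move=> t; apply: minimal_component_mincomp.
Qed.
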